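(* Let $K$ be a field, $R$ a connected $\mathbb N$-graded $K$-algebra, and let $A$ be a graded trimmed right double Ore extension of $R$, with generators $x_1,x_2$, relation $x_2x_1=p_{12}x_1x_2+p_{11}x_1^2$ ($p_{12},p_{11}\in K$) and $x_ir=\sigma_{i1}(r)x_1+\sigma_{i2}(r)x_2$ for $r\in R$, $i=1,2$. Then $A$ is a graded quasi-commutative skew PBW extension of $R$ (in $x_1,x_2$) if and only if $p_{12}\ne0$, $p_{11}=0$, $\sigma_{11},\sigma_{22}$ are automorphisms of $R$, and $\sigma_{12}(r)=\sigma_{21}(r)=0$ for all $r\in R$.
   Context: A graded algebra is connected if its degree-zero part is $K$. A $K$-algebra $B\supseteq R$ is a right double Ore extension of $R$ if it is generated by $R$ and $x_1,x_2$; $x_2x_1=p_{12}x_1x_2+p_{11}x_1^2+\tau_1x_1+\tau_2x_2+\tau_0$ with $p_{12},p_{11}\in K$, $\tau_i\in R$; $B$ is a free left $R$-module with basis $\{x_1^ax_2^b\}$; $x_1R+x_2R\subseteq Rx_1+Rx_2+R$; write $x_ir=\sigma_{i1}(r)x_1+\sigma_{i2}(r)x_2+\delta_i(r)$. It is trimmed if $\delta_1=\delta_2=0$ and $\tau_0=\tau_1=\tau_2=0$; graded if all relations are homogeneous with $\deg x_1=\deg x_2=1$. A ring $A$ is a skew PBW extension of $R$ in $x_1,\dots,x_n$ if $R\subseteq A$; $A$ is a free left $R$-module on the monomials $x_1^{\alpha_1}\cdots x_n^{\alpha_n}$; for each $i$ and $r\ne0$ there is $c_{i,r}\in R\setminus\{0\}$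 with $x_ir-c_{i,r}x_i\in R$; for all $i,j$ there is $c_{i,j}\in R\setminus\{0\}$ with $x_jx_i-c_{i,j}x_ix_j\in R+Rx_1+\cdots+Rx_n$; then $x_ir=\sigma_i(r)x_i+\delta_i(r)$ with $\sigma_i$ an injective endomorphism. It is quasi-commutative if $x_ir=c_{i,r}x_i$ and $x_jx_i=c_{i,j}x_ix_j$; bijective if all $\sigma_i$ are bijective and $c_{i,j}$ invertible; graded if bijective, $R$ $\mathbb N$-graded, $\sigma_i$ graded, $\delta_i(R_m)\subseteq R_{m+1}$, and $x_jx_i-c_{i,j}x_ix_j\in R_2+R_1x_1+\cdots+R_1x_n$ with $c_{i,j}\in R_0$. *)

From HB Require Import structures.
From mathcomp Require Import all_boot all_order all_algebra.
Set Implicit Arguments. Unset Strict Implicit. Unset Printing Implicit Defensive.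
Import GRing.Theory.
Local Open Scope ring_scope.

Section Defs.
Variables (K : fieldType) (A : algType K).

Record subalgebra (R : {pred A}) : Prop := {
  sub1 : 1 \in R;
  subD : forall r s, r \in R -> s \in R -> r + s \in R;
  subN : forall r, r \in R -> - r \in R;
  subM : forall r s, r \in R -> s \in R -> r * s \in R;
  subZ : forall (k : K) r, r \in R -> k *: r \in R }.

Record connected_graded (R : {pred A}) (Rg : nat -> {pred A}) : Prop := {
  cg_sub : forall n r, r \in Rg n -> r \in R;
  cg_0 : forall n, 0 \in Rg n;
  cg_D : forall n r s, r \in Rg n -> s \in Rg n -> r + s \in Rg n;
  cg_Z : forall n (k : K) r, r \in Rg n -> k *: r \in Rg n;
  cg_M : forall m n r s, r \in Rg m -> s \in Rg n -> r * s \in Rg (m + n);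
  cg_1 : 1 \in Rg 0;
  cg_span : forall r, r \in R -> exists (N : nat) (f : nat -> A),
      (forall n, f n \in Rg n) /\ r = \sum_(n < N) f n;
  cg_direct : forall (N : nat) (f : nat -> A), (forall n, f n \in Rg n) ->
      \sum_(n < N) f n = 0 -> forall n, (n < N)%N -> f n = 0;
  cg_conn : forall r, r \in Rg 0%N -> exists k : K, r = k%:A }.

Definition mono (n : nat) (x : 'I_n -> A) (a : {ffun 'I_n -> nat}) : A :=
  \prod_(i < n) x i ^+ a i.

Definition left_monomial_basis (R : {pred A}) (n : nat) (x : 'I_n -> A) : Prop :=
  (forall f : A, exists (s : seq {ffun 'I_n -> nat}) (c : {ffun 'I_n -> nat} -> A),
      (forall a, c a \in R) /\ f = \sum_(a <- s) c a * mono x a) /\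
  (forall (s : seq {ffun 'I_n -> nat}) (c : {ffun 'I_n -> nat} -> A),
      uniq s -> (forall a, c a \in R) ->
      \sum_(a <- s) c a * mono x a = 0 -> forall a, a \in s -> c a = 0).

Definition in_lin (P0 P1 : {pred A}) (n : nat) (x : 'I_n -> A) (v : A) : Prop :=
  exists (r0 : A) (r : 'I_n -> A), r0 \in P0 /\ (forall k, r k \in P1) /\
    v = r0 + \sum_(k < n) r k * x k.

Record skew_PBW (R : {pred A}) (n : nat) (x : 'I_n -> A) : Prop := {
  spbw_basis : left_monomial_basis R x;
  spbw_ore : forall i r, r \in R -> r != 0 ->
      exists c, [/\ c \in R, c != 0 & x i * r - c * x i \in R];
  spbw_comm : forall i j, exists c, [/\ c \in R, c != 0 &
      in_lin R R x (x j * x i - c * x i * x j)] }.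

Record quasi_commutative (R : {pred A}) (n : nat) (x : 'I_n -> A) : Prop := {
  qc_ore : forall i r, r \in R -> r != 0 ->
      exists c, [/\ c \in R, c != 0 & x i * r = c * x i];
  qc_comm : forall i j, exists c, [/\ c \in R, c != 0 & x j * x i = c * x i * x j] }.

(** Graded skew PBW extension (which includes being bijective):
    sigma_i, delta_i are the maps with x_i r = sigma_i(r) x_i + delta_i(r). *)
Record graded_skew_PBW (R : {pred A}) (Rg : nat -> {pred A}) (n : nat)
    (x : 'I_n -> A) : Prop := {
  gs_skew : skew_PBW R x;
  gs_maps : exists sigma delta : 'I_n -> A -> A,
    [/\ forall i r, r \in R ->
          [/\ sigma i r \in R, delta i r \in R & x i * r = sigma i r * x i + delta i r],
        forall i, {in R &, injective (sigma i)},
        forall i s, s \in R -> exists2 r, r \in R & sigma i r = s,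
        forall i m r, r \in Rg m -> sigma i r \in Rg m &
        forall i m r, r \in Rg m -> delta i r \in Rg m.+1];
  gs_comm : forall i j, exists c, [/\ c \in Rg 0%N,
      (exists2 d, d \in R & c * d = 1 /\ d * c = 1) &
      in_lin (Rg 2%N) (Rg 1%N) x (x j * x i - c * x i * x j)] }.

Definition graded_qc_skew_PBW (R : {pred A}) (Rg : nat -> {pred A}) (n : nat)
    (x : 'I_n -> A) : Prop :=
  graded_skew_PBW R Rg x /\ quasi_commutative R x.

(** The two generators as a family indexed by 'I_2 (index 0 is x1, 1 is x2). *)
Definition pair_gen (x1 x2 : A) : 'I_2 -> A :=
  fun i => if val i == 0%N then x1 else x2.

Record graded_trimmed_right_double_Ore (R : {pred A}) (Rg : nat -> {pred A})
    (x1 x2 : A) (p12 p11 : K) (s11 s12 s21 s22 : A -> A) : Prop := {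
  dO_basis : left_monomial_basis R (pair_gen x1 x2);
  dO_rel : x2 * x1 = p12 *: (x1 * x2) + p11 *: (x1 * x1);
  dO_sR : forall r, r \in R ->
      [/\ s11 r \in R, s12 r \in R, s21 r \in R & s22 r \in R];
  dO_x1 : forall r, r \in R -> x1 * r = s11 r * x1 + s12 r * x2;
  dO_x2 : forall r, r \in R -> x2 * r = s21 r * x1 + s22 r * x2;
  dO_graded : forall m r, r \in Rg m ->
      [/\ s11 r \in Rg m, s12 r \in Rg m, s21 r \in Rg m & s22 r \in Rg m] }.

Record automorphism_on (R : {pred A}) (f : A -> A) : Prop := {
  aut_R : forall r, r \in R -> f r \in R;
  aut_1 : f 1 = 1;
  aut_D : {in R &, forall r s, f (r + s) = f r + f s};
  aut_M : {in R &, forall r s, f (r * s) = f r * f s};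
  aut_Z : forall (k : K), {in R, forall r, f (k *: r) = k *: f r};
  aut_inj : {in R &, injective f};
  aut_surj : forall s, s \in R -> exists2 r, r \in R & f r = s }.

End Defs.

(* Both a (graded) skew PBW structure and the double Ore data write x_i r in
   the left R-basis 1, x1, x2, x1 x2, x1^2 of the monomials of degree <= 2.
   Comparing coefficients in x1 r and x2 r forces s12 = s21 = 0 and identifies
   s11, s22 with the bijective PBW maps sigma_1, sigma_2; they are then ring
   automorphisms because x_i r = s_ii(r) x_i and x_i is left regular over R.
   Comparing x2 x1 = c x1 x2 with x2 x1 = p12 x1 x2 + p11 x1^2 gives c = p12,
   so p12 <> 0, and p11 = 0.  Conversely, under these conditions
   x_i r = s_ii(r) x_i and x2 x1 = p12 x1 x2 are exactly the relations of a
   graded quasi-commutative skew PBW extension with delta_i = 0 and scalar,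
   hence invertible, commutation constants. *)

From HB Require Import structures.
From mathcomp Require Import all_boot all_order all_algebra.
Set Implicit Arguments.
Unset Strict Implicit.
Unset Printing Implicit Defensive.
Import GRing.Theory.
Local Open Scope ring_scope.

Lemma alg_eq0 (K : fieldType) (A : algType K) (k : K) : (k%:A == 0 :> A) = (k == 0).
Proof. by rewrite scaler_eq0 oner_eq0 orbF. Qed.

Lemma in_lin0 (K : fieldType) (A : algType K) (P0 P1 : {pred A}) n (x : 'I_n -> A) :
  0 \in P0 -> 0 \in P1 -> in_lin P0 P1 x 0.
Proof.
move=> P00 P10; exists 0, (fun=> 0); split=> //.
by rewrite big1 ?addr0 // => k _; rewrite mul0r.
Qed.

Section Subalgebra.
Variables (K : fieldType) (A : algType K) (R : {pred A}).
Hypothesis SA : subalgebra R.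

Lemma sub0 : 0 \in R.
Proof. by rewrite -(subrr 1) (subD SA) ?(subN SA) ?(sub1 SA). Qed.

Lemma subB r s : r \in R -> s \in R -> r - s \in R.
Proof. by move=> Rr Rs; rewrite (subD SA) ?(subN SA). Qed.

Lemma sub_scalar (k : K) : k%:A \in R.
Proof. by rewrite (subZ SA) ?(sub1 SA). Qed.

Lemma sub_scalar_unit (k : K) : k != 0 ->
  exists2 d, d \in R & k%:A * d = 1 /\ d * k%:A = 1.
Proof.
move=> k_neq0; exists k^-1%:A; first exact: sub_scalar.
by rewrite !mulr_algl !scalerA mulfV ?mulVf // scale1r.
Qed.

Lemma quasi_commutative_skew_PBW n (x : 'I_n -> A) :
  left_monomial_basis R x -> quasi_commutative R x -> skew_PBW R x.
Proof.
move=> basis [qc_ore qc_comm]; split=> // [i r Rr r_neq0 | i j].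
  have [c [Rc c_neq0 ->]] := qc_ore i r Rr r_neq0.
  by exists c; rewrite subrr sub0.
have [c [Rc c_neq0 ->]] := qc_comm i j.
by exists c; split; rewrite ?subrr; last apply: in_lin0; rewrite ?sub0.
Qed.

Lemma automorphism0 f : automorphism_on R f -> f 0 = 0.
Proof.
move=> Af; apply: (addrI (f 0)).
by rewrite -(aut_D Af) ?sub0 // !addr0.
Qed.

Lemma automorphism_neq0 f r : automorphism_on R f -> r \in R -> r != 0 -> f r != 0.
Proof.
move=> Af Rr; apply: contra => /eqP fr0; apply/eqP.
by apply: (aut_inj Af) => //; rewrite ?sub0 // fr0 automorphism0.
Qed.

Lemma automorphism_of_skew_commutation (x : A) (f : A -> A) :
    {in R &, forall a b, a * x = b * x -> a = b} ->
    (forall r, r \in R -> f r \in R /\ x * r = f r * x) ->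
    {in R &, injective f} -> (forall s, s \in R -> exists2 r, r \in R & f r = s) ->
  automorphism_on R f.
Proof.
move=> regx xf finj fsurj.
have fR r (Rr : r \in R) : f r \in R by case: (xf r Rr).
have xfE r (Rr : r \in R) : x * r = f r * x by case: (xf r Rr).
split=> //.
- apply: regx; rewrite ?fR ?(sub1 SA) //.
  by rewrite -xfE ?(sub1 SA) // mulr1 mul1r.
- move=> r s Rr Rs; apply: regx; rewrite ?fR ?(subD SA) ?fR //.
  by rewrite -xfE ?(subD SA) // mulrDr mulrDl !xfE.
- move=> r s Rr Rs; apply: regx; rewrite ?fR ?(subM SA) ?fR //.
  by rewrite -xfE ?(subM SA) // mulrA xfE // -mulrA xfE // mulrA.
- move=> k r Rr; apply: regx; rewrite ?fR ?(subZ SA) ?fR //.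
  by rewrite -xfE ?(subZ SA) // -scalerAr xfE // scalerAl.
Qed.

End Subalgebra.

Definition pair_exp (a b : nat) : {ffun 'I_2 -> nat} :=
  [ffun i : 'I_2 => if val i == 0%N then a else b].

Lemma eq_pair_exp a b c d : (pair_exp a b == pair_exp c d) = (a == c) && (b == d).
Proof.
apply/eqP/andP => [e | [/eqP-> /eqP->] //].
have e0 := congr1 (fun f : {ffun 'I_2 -> nat} => f ord0) e.
have e1 := congr1 (fun f : {ffun 'I_2 -> nat} => f ord_max) e.
by move: e0 e1; rewrite !ffunE /= => -> ->.
Qed.

Section PairBasis.
Variables (K : fieldType) (A : algType K) (R : {pred A}) (x1 x2 : A).
Hypothesis SA : subalgebra R.
Hypothesis basis : left_monomial_basis R (pair_gen x1 x2).

Lemma mono_pair_exp a b : mono (pair_gen x1 x2) (pair_exp a b) = x1 ^+ a * x2 ^+ b.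
Proof. by rewrite /mono !big_ord_recl big_ord0 !ffunE mulr1. Qed.

Lemma low_monomials_free r0 r1 r2 r3 r4 :
    r0 \in R -> r1 \in R -> r2 \in R -> r3 \in R -> r4 \in R ->
    r0 + r1 * x1 + r2 * x2 + r3 * (x1 * x2) + r4 * (x1 * x1) = 0 ->
  [/\ r0 = 0, r1 = 0, r2 = 0, r3 = 0 & r4 = 0].
Proof.
have R0 := sub0 SA.
move=> R_0 R_1 R_2 R_3 R_4 sum0.
pose c (a : {ffun 'I_2 -> nat}) :=
  match a ord0, a ord_max with
  | 0%N, 0%N => r0 | 1%N, 0%N => r1 | 0%N, 1%N => r2 | 1%N, 1%N => r3
  | 2%N, 0%N => r4 | _, _ => 0
  end.
have cR a : c a \in R.
  by rewrite /c; case: (a ord0) => [|[|[|?]]]; case: (a ord_max) => [|[|?]].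
pose s := [:: pair_exp 0 0; pair_exp 1 0; pair_exp 0 1; pair_exp 1 1; pair_exp 2 0].
have uniq_s : uniq s by rewrite /= !inE !eq_pair_exp.
have := (proj2 basis) s c uniq_s cR.
rewrite !big_cons big_nil !mono_pair_exp /c !ffunE /= expr2 !mulr1 !mul1r addr0 !addrA.
move=> /(_ sum0) c0.
have := c0 (pair_exp 0 0); have := c0 (pair_exp 1 0); have := c0 (pair_exp 0 1).
have := c0 (pair_exp 1 1); have := c0 (pair_exp 2 0).
by rewrite !ffunE /= !inE !eqxx !orbT; do !move=> /(_ isT) ->.
Qed.

Lemma linear_coef_eq a0 a1 a2 b0 b1 b2 :
    a0 \in R -> a1 \in R -> a2 \in R -> b0 \in R -> b1 \in R -> b2 \in R ->
    a0 + a1 * x1 + a2 * x2 = b0 + b1 * x1 + b2 * x2 ->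
  [/\ a0 = b0, a1 = b1 & a2 = b2].
Proof.
move=> Ra0 Ra1 Ra2 Rb0 Rb1 Rb2 e.
have [||||| |e0 e1 e2 _ _] := @low_monomials_free (a0 - b0) (a1 - b1) (a2 - b2) 0 0;
  rewrite ?subB ?sub0 //.
  rewrite !mul0r !addr0 !mulrBl (addrACA a0) -opprD (addrACA (a0 + a1 * x1)) -opprD.
  by rewrite e subrr.
by split; apply/eqP; rewrite -subr_eq0 ?e0 ?e1 ?e2.
Qed.

Lemma quadratic_coef_eq a3 a4 b3 b4 :
    a3 \in R -> a4 \in R -> b3 \in R -> b4 \in R ->
    a3 * (x1 * x2) + a4 * (x1 * x1) = b3 * (x1 * x2) + b4 * (x1 * x1) ->
  a3 = b3 /\ a4 = b4.
Proof.
move=> Ra3 Ra4 Rb3 Rb4 e.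
have [||||| |_ _ _ e3 e4] := @low_monomials_free 0 0 0 (a3 - b3) (a4 - b4);
  rewrite ?subB ?sub0 //.
  by rewrite !mul0r !add0r !mulrBl (addrACA (a3 * _)) -opprD e subrr.
by split; apply/eqP; rewrite -subr_eq0 ?e3 ?e4.
Qed.

Lemma x1_regular : {in R &, forall a b, a * x1 = b * x1 -> a = b}.
Proof.
move=> a b Ra Rb e.
have R0 := sub0 SA.
have e' : 0 + a * x1 + 0 * x2 = 0 + b * x1 + 0 * x2 by rewrite !mul0r !addr0 !add0r.
by have [] := linear_coef_eq R0 Ra R0 R0 Rb R0 e'.
Qed.

Lemma x2_regular : {in R &, forall a b, a * x2 = b * x2 -> a = b}.
Proof.
move=> a b Ra Rb e.
have R0 := sub0 SA.
have e' : 0 + 0 * x1 + a * x2 = 0 + 0 * x1 + b * x2 by rewrite !mul0r !add0r.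
by have [] := linear_coef_eq R0 R0 Ra R0 R0 Rb e'.
Qed.

End PairBasis.

Section TrimmedDoubleOre.
Variables (K : fieldType) (A : algType K) (R : {pred A}) (Rg : nat -> {pred A}).
Variables (x1 x2 : A) (p12 p11 : K) (s11 s12 s21 s22 : A -> A).
Hypotheses (SA : subalgebra R) (CG : connected_graded R Rg).
Hypothesis DO : graded_trimmed_right_double_Ore R Rg x1 x2 p12 p11 s11 s12 s21 s22.

Lemma double_Ore_data_of_graded_qc_PBW :
    graded_qc_skew_PBW R Rg (pair_gen x1 x2) ->
  [/\ p12 != 0, p11 = 0, automorphism_on R s11, automorphism_on R s22 &
      forall r, r \in R -> s12 r = 0 /\ s21 r = 0].
Proof.
move=> [[_ [sigma [delta [x_sigma sigma_inj sigma_surj _ _]]] _] [_ qc_comm]].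
have basis := dO_basis DO; have R0 := sub0 SA.
have x1E r : r \in R -> s11 r = sigma ord0 r /\ s12 r = 0.
  move=> Rr; have [Rs Rd /= xE] := x_sigma ord0 r Rr.
  have [R11 R12 _ _] := dO_sR DO Rr.
  have e : delta ord0 r + sigma ord0 r * x1 + 0 * x2 = 0 + s11 r * x1 + s12 r * x2.
    by rewrite mul0r addr0 add0r addrC -xE (dO_x1 DO Rr).
  by have [_ -> ->] := linear_coef_eq SA basis Rd Rs R0 R0 R11 R12 e.
have x2E r : r \in R -> s22 r = sigma ord_max r /\ s21 r = 0.
  move=> Rr; have [Rs Rd /= xE] := x_sigma ord_max r Rr.
  have [_ _ R21 R22] := dO_sR DO Rr.
  have e : delta ord_max r + 0 * x1 + sigma ord_max r * x2 = 0 + s21 r * x1 + s22 r * x2.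
    by rewrite mul0r addr0 add0r addrC -xE (dO_x2 DO Rr).
  by have [_ -> ->] := linear_coef_eq SA basis Rd R0 Rs R0 R21 R22 e.
have [c [Rc c_neq0 /= xc]] := qc_comm ord0 ord_max.
have e : c * (x1 * x2) + 0 * (x1 * x1) = p12%:A * (x1 * x2) + p11%:A * (x1 * x1).
  by rewrite mul0r addr0 mulrA -xc (dO_rel DO) !mulr_algl.
have [c_p12 p11_0] :=
  quadratic_coef_eq SA basis Rc R0 (sub_scalar SA p12) (sub_scalar SA p11) e.
split.
- by rewrite -(alg_eq0 A) -c_p12.
- by apply/eqP; rewrite -(alg_eq0 A) -p11_0.
- apply: (automorphism_of_skew_commutation SA (x1_regular SA basis)).
  + move=> r Rr; have [R11 _ _ _] := dO_sR DO Rr.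
    by rewrite (dO_x1 DO Rr) (x1E r Rr).2 mul0r addr0.
  + by move=> r q Rr Rq; rewrite (x1E r Rr).1 (x1E q Rq).1; apply: sigma_inj.
  + by move=> q Rq; have [r Rr <-] := sigma_surj ord0 q Rq; exists r; rewrite ?(x1E r Rr).1.
- apply: (automorphism_of_skew_commutation SA (x2_regular SA basis)).
  + move=> r Rr; have [_ _ _ R22] := dO_sR DO Rr.
    by rewrite (dO_x2 DO Rr) (x2E r Rr).2 mul0r add0r.
  + by move=> r q Rr Rq; rewrite (x2E r Rr).1 (x2E q Rq).1; apply: sigma_inj.
  + by move=> q Rq; have [r Rr <-] := sigma_surj ord_max q Rq; exists r; rewrite ?(x2E r Rr).1.
- by move=> r Rr; rewrite (x1E r Rr).2 (x2E r Rr).2.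
Qed.

Lemma pair_gen_comm : p12 != 0 -> p11 = 0 -> forall i j : 'I_2,
  exists2 k : K, k != 0 &
    pair_gen x1 x2 j * pair_gen x1 x2 i = k%:A * pair_gen x1 x2 i * pair_gen x1 x2 j.
Proof.
move=> p12_neq0 p11_0.
have x21 : x2 * x1 = p12%:A * x1 * x2.
  by rewrite (dO_rel DO) p11_0 scale0r addr0 -mulrA mulr_algl.
have x12 : x1 * x2 = p12^-1%:A * x2 * x1.
  by rewrite -mulrA x21 -!mulrA !mulr_algl scalerA mulVf // scale1r.
move=> [[|[|//]] ?] [[|[|//]] ?] /=.
- by exists 1; rewrite ?oner_neq0 // scale1r mul1r.
- by exists p12.
- by exists p12^-1; rewrite ?invr_eq0.
- by exists 1; rewrite ?oner_neq0 // scale1r mul1r.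
Qed.

Lemma graded_qc_PBW_of_double_Ore_data :
    p12 != 0 -> p11 = 0 -> automorphism_on R s11 -> automorphism_on R s22 ->
    (forall r, r \in R -> s12 r = 0 /\ s21 r = 0) ->
  graded_qc_skew_PBW R Rg (pair_gen x1 x2).
Proof.
move=> p12_neq0 p11_0 aut11 aut22 s12_s21_0.
pose sigma (i : 'I_2) := if val i == 0%N then s11 else s22.
have aut_sigma i : automorphism_on R (sigma i) by case: i => [[|[|//]] ?].
have x_sigma i r : r \in R -> pair_gen x1 x2 i * r = sigma i r * pair_gen x1 x2 i.
  move=> Rr; have [s12r s21r] := s12_s21_0 r Rr.
  case: i => [[|[|//]] ?] /=.
  + by rewrite (dO_x1 DO Rr) s12r mul0r addr0.
  + by rewrite (dO_x2 DO Rr) s21r mul0r add0r.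
have comm := pair_gen_comm p12_neq0 p11_0.
have QC : quasi_commutative R (pair_gen x1 x2).
  split=> [i r Rr r_neq0 | i j].
    exists (sigma i r); split; last exact: x_sigma.
      exact: (aut_R (aut_sigma i)).
    exact: automorphism_neq0 (aut_sigma i) Rr r_neq0.
  have [k k_neq0 ->] := comm i j.
  by exists k%:A; rewrite sub_scalar ?alg_eq0.
split=> //; split.
- exact: quasi_commutative_skew_PBW (dO_basis DO) QC.
- exists sigma, (fun _ _ => 0); split.
  + by move=> i r Rr; rewrite addr0 x_sigma ?sub0 ?(aut_R (aut_sigma i)).
  + by move=> i; apply: aut_inj.
  + by move=> i; apply: aut_surj.
  + by move=> [[|[|//]] ?] m r /(dO_graded DO) [].
  + by move=> i m r _; apply: (cg_0 CG).
- move=> i j; have [k k_neq0 ->] := comm i j.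
  exists k%:A; split; first by rewrite (cg_Z CG) ?(cg_1 CG).
    exact: sub_scalar_unit.
  by rewrite subrr; apply: in_lin0; apply: (cg_0 CG).
Qed.

End TrimmedDoubleOre.

Theorem theorem3p9 (K : fieldType) (A : algType K) (R : {pred A})
    (Rg : nat -> {pred A}) (x1 x2 : A) (p12 p11 : K)
    (s11 s12 s21 s22 : A -> A) :
  subalgebra R -> connected_graded R Rg ->
  graded_trimmed_right_double_Ore R Rg x1 x2 p12 p11 s11 s12 s21 s22 ->
  (graded_qc_skew_PBW R Rg (pair_gen x1 x2) <->
   [/\ p12 != 0, p11 = 0, automorphism_on R s11, automorphism_on R s22 &
       forall r, r \in R -> s12 r = 0 /\ s21 r = 0]).
Proof.
move=> SA CG DO; split; first exact: double_Ore_data_of_graded_qc_PBW.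
by case; apply: graded_qc_PBW_of_double_Ore_data.
Qed.
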